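(* Let $\mathcal{F}$ be a nonprincipal filter on $\omega$ and let $\mathcal{F}^c=\{X\subseteq\omega:\omega\setminus X\in\mathcal{F}\}$. Then $\mathcal{F}+\mathcal{F}=\mathcal{F}^c$, where $\mathcal{F}+\mathcal{F}=\{X+Y: X,Y\in\mathcal{F}\}$.
   Context: Subsets of $\omega$ are identified with their characteristic functions in $2^\omega$, and $X+Y$ denotes coordinatewise addition modulo $2$ of characteristic functions (i.e. the symmetric difference of $X$ and $Y$). *)

(* Subsets of omega = characteristic functions nat -> bool (2^omega). *)
From Stdlib Require Import Bool.

Definition subset_w := nat -> bool.

(* X + Y : coordinatewise addition mod 2 (symmetric difference) *)
Definition xsum (X Y : subset_w) : subset_w := fun n => xorb (X n) (Y n).

Definition complement (X : subset_w) : subset_w := fun n => negb (X n).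

Definition incl (A B : subset_w) : Prop := forall n, A n = true -> B n = true.

Definition is_filter (F : subset_w -> Prop) : Prop :=
  F (fun _ => true) /\
  ~ F (fun _ => false) /\
  (forall X Y, F X -> incl X Y -> F Y) /\
  (forall X Y, F X -> F Y -> F (fun n => X n && Y n)).

Definition principal (F : subset_w -> Prop) : Prop :=
  exists A : subset_w, forall X, F X <-> incl A X.

Definition nonprincipal_filter (F : subset_w -> Prop) : Prop :=
  is_filter F /\ ~ principal F.

Definition dual_ideal (F : subset_w -> Prop) : subset_w -> Prop :=
  fun X => F (complement X).

Definition filter_sum (F : subset_w -> Prop) : subset_w -> Prop :=
  fun Z => exists X Y, F X /\ F Y /\ Z = xsum X Y.

(* The complement of X + Y contains X ∩ Y, so it lies in F whenever X and Y
   do; conversely every Z with ω \ Z in F is ω + (ω \ Z). *)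

From Stdlib Require Import Bool FunctionalExtensionality.

Lemma incl_andb_complement_xsum (X Y : subset_w) :
  incl (fun n => X n && Y n) (complement (xsum X Y)).
Proof.
  intros n Hn; apply andb_prop in Hn as [HX HY].
  unfold complement, xsum; rewrite HX, HY; reflexivity.
Qed.

Lemma xsum_full_complement (Z : subset_w) :
  xsum (fun _ => true) (complement Z) = Z.
Proof.
  apply functional_extensionality; intro n.
  unfold xsum, complement; destruct (Z n); reflexivity.
Qed.

Lemma filter_sum_sub_dual_ideal (F : subset_w -> Prop) :
  (forall X Y, F X -> incl X Y -> F Y) ->
  (forall X Y, F X -> F Y -> F (fun n => X n && Y n)) ->
  forall Z, filter_sum F Z -> dual_ideal F Z.
Proof.
  intros Hup Hcap Z [X [Y [HX [HY ->]]]].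
  exact (Hup _ _ (Hcap X Y HX HY) (incl_andb_complement_xsum X Y)).
Qed.

Lemma dual_ideal_sub_filter_sum (F : subset_w -> Prop) :
  F (fun _ => true) ->
  forall Z, dual_ideal F Z -> filter_sum F Z.
Proof.
  intros Hfull Z HZ.
  exists (fun _ => true), (complement Z).
  split; [exact Hfull | split; [exact HZ |]].
  symmetry; apply xsum_full_complement.
Qed.

Theorem lemma1p5 (F : subset_w -> Prop) :
  nonprincipal_filter F ->
  forall Z : subset_w, filter_sum F Z <-> dual_ideal F Z.
Proof.
  intros [[Hfull [_ [Hup Hcap]]] _] Z; split.
  - exact (filter_sum_sub_dual_ideal F Hup Hcap Z).
  - exact (dual_ideal_sub_filter_sum F Hfull Z).
Qed.
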